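(* Let $n,k$ be integers with $2\le 2k\le n-4$. Let $\eta=(\eta_1<\dots<\eta_l)\in\overline{\mathbb{D}}^{\,\mathrm{o}}_{2k+2}$, where $\overline{\mathbb{D}}^{\,\mathrm{o}}_{2k+2}=\mathbb{D}^{\,\mathrm{o}}_{2k+2}\setminus\{(1,2k+1)\}$ if $2k=n-4$ and $\overline{\mathbb{D}}^{\,\mathrm{o}}_{2k+2}=\mathbb{D}^{\,\mathrm{o}}_{2k+2}$ otherwise. Let $Y_{\eta^*}$ be the Young diagram whose main diagonal consists of exactly the cells $c_{1,1},\dots,c_{l+1,l+1}$ and which satisfies $h_{1,1}=2n-5$, $h_{i,i}=\eta_{l-(i-2)}$ for $2\le i\le l+1$, and $a(c_{i,i})=l(c_{i,i})$ for $1\le i\le l+1$. Let $\lambda$ be the partition whose parts are the hook lengths of the first-column cells of $Y_{\eta^*}$. Then $\lambda$ is a partition of $T_{n,n-2k}=n(n+1)/2-(n-2k)$.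
   Context: $\mathbb{D}^{\,\mathrm{o}}_N$ is the set of partitions of $N$ into distinct odd parts, i.e. sequences $(\eta_1<\dots<\eta_l)$ of odd positive integers with sum $N$ and $l\ge 2$. Young diagrams are in English convention: rows top to bottom, columns left to right, $c_{i,j}$ the cell in row $i$, column $j$; arm $a(c_{i,j})$ = number of cells to its right in its row, leg $l(c_{i,j})$ = number of cells below it in its column, hook length $h_{i,j}=a+l+1$. *)

From mathcomp Require Import all_boot.
Set Implicit Arguments. Unset Strict Implicit. Unset Printing Implicit Defensive.

Definition distinct_odd_partition (N : nat) (eta : seq nat) : bool :=
  [&& sorted ltn eta, all odd eta, sumn eta == N & 2 <= size eta].

Definition Dbar_odd (n k : nat) (eta : seq nat) : bool :=
  distinct_odd_partition (2 * k + 2) eta &&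
  ((2 * k == n - 4) ==> (eta != [:: 1; 2 * k + 1])).

(* A Young diagram is given by its (weakly decreasing, positive) row lengths.
   English convention; rows and columns are 1-indexed. *)
Definition young (mu : seq nat) : bool := sorted geq mu && all (fun r => 0 < r) mu.

(* length of row i (1-indexed); 0 beyond the diagram *)
Definition row (mu : seq nat) (i : nat) : nat := nth 0 mu i.-1.
Definition col (mu : seq nat) (j : nat) : nat := count (fun r => j <= r) mu.

Definition in_diagram (mu : seq nat) (i j : nat) : bool :=
  [&& 1 <= i, 1 <= j & j <= row mu i].

Definition arm (mu : seq nat) (i j : nat) : nat := row mu i - j.
Definition leg (mu : seq nat) (i j : nat) : nat := col mu j - i.
Definition hook (mu : seq nat) (i j : nat) : nat := arm mu i j + leg mu i j + 1.

Definition first_col_hooks (mu : seq nat) : seq nat :=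
  [seq hook mu i 1 | i <- iota 1 (size mu)].

Definition is_partition_of (lam : seq nat) (N : nat) : bool :=
  [&& sorted geq lam, all (fun r => 0 < r) lam & sumn lam == N].

Definition Tnm (n m : nat) : nat := (n * (n + 1)) %/ 2 - m.

Definition Y_eta_star (n : nat) (eta mu : seq nat) : Prop :=
  let l := size eta in
  [/\ young mu,
      (forall i, 1 <= i -> in_diagram mu i i = (i <= l.+1)),
      hook mu 1 1 = 2 * n - 5,
      (forall i, 2 <= i <= l.+1 -> hook mu i i = nth 0 eta (l - (i - 2)).-1)
    & (forall i, 1 <= i <= l.+1 -> arm mu i i = leg mu i i)].

From mathcomp Require Import all_boot zify.
Set Implicit Arguments. Unset Strict Implicit. Unset Printing Implicit Defensive.

(* A Young diagram is determined by its diagonal hooks, and its size is their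
   sum.  The conditions defining Y_{eta^*} make it the self-conjugate diagram
   with diagonal arms n-3 > (eta_l-1)/2 > ... > (eta_1-1)/2, which exists
   because 2k <= n-4; it has size (2n-5) + (2k+2) and n-2 rows.  The
   first-column hooks of a diagram with r rows sum to its size plus
   binom(r,2), which here gives n(n+1)/2 - (n-2k). *)

Lemma col1_young mu : young mu -> col mu 1 = size mu.
Proof. by case/andP=> _ mu_pos; apply/eqP; rewrite -all_count. Qed.

Lemma leq_row_young mu i j : young mu -> 1 <= i <= j -> row mu j <= row mu i.
Proof.
case/andP=> mu_sorted _ /andP[i_gt0 le_ij]; rewrite /row.
have [j_lt|j_ge] := ltnP j.-1 (size mu); last by rewrite nth_default.
apply: (sorted_leq_nth (leT := geq)) => //; rewrite ?inE; try lia.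
- by move=> x y z /= ? ?; lia.
- by move=> x /=.
Qed.

Lemma row_gt0_young mu i : young mu -> 1 <= i <= size mu -> 0 < row mu i.
Proof.
case/andP=> _ /allP mu_pos; case: i => [|i] // /andP[_ i_lt].
exact/mu_pos/mem_nth.
Qed.

Lemma sumn_rows mu : sumn mu = \sum_(1 <= i < (size mu).+1) row mu i.
Proof. by rewrite sumnE (big_nth 0) big_add1. Qed.

Lemma sum_leq_nat x d : \sum_(1 <= j < d.+1) (j <= x : nat) = minn x d.
Proof.
elim: d => [|d IHd]; first by rewrite big_geq //; lia.
by rewrite big_nat_recr //= IHd; case: leqP; lia.
Qed.

Lemma sumn_sum_count s d : all (fun x => x <= d) s ->
  sumn s = \sum_(1 <= j < d.+1) count (fun x => j <= x) s.
Proof.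
elim: s => [|x s IHs] /=; first by rewrite big1.
by case/andP=> x_le s_le; rewrite big_split /= -IHs // sum_leq_nat; lia.
Qed.

Lemma sum_double_nat d : \sum_(1 <= i < d.+1) i.*2 = d * d.+1.
Proof.
elim: d => [|d IHd]; first by rewrite big_geq.
by rewrite big_nat_recr //= IHd; lia.
Qed.

Section DurfeeSquare.

Variables (mu : seq nat) (d : nat).
Hypotheses (mu_young : young mu) (d_le_row : d <= row mu d)
           (row_le_d : row mu d.+1 <= d).

Let d_le_size : d <= size mu.
Proof. by case: leqP => // lt_size; move: d_le_row; rewrite /row nth_default; lia. Qed.

Lemma col_durfee i : 1 <= i <= d ->
  col mu i = d + count (fun x => i <= x) (drop d mu).
Proof.
move=> i_range; rewrite /col -{1}(cat_take_drop d mu) count_cat.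
congr (_ + _); rewrite -{2}(size_takel d_le_size); apply/eqP; rewrite -all_count.
apply/(all_nthP 0) => p; rewrite size_takel // => p_lt.
rewrite nth_take // -[nth 0 mu p]/(row mu p.+1).
by have := leq_row_young (i := p.+1) (j := d) mu_young; lia.
Qed.

Lemma sumn_diag_hooks : sumn mu = \sum_(1 <= i < d.+1) hook mu i i.
Proof.
set r := drop d mu.
have r_le_d : all (fun x => x <= d) r.
  apply/(all_nthP 0) => p _; rewrite nth_drop -[nth 0 mu _]/(row mu (d + p).+1).
  by have := leq_row_young (i := d.+1) (j := (d + p).+1) mu_young; lia.
have sumn_mu : sumn mu = \sum_(1 <= i < d.+1) row mu i + sumn r.
  rewrite -{1}(cat_take_drop d mu) sumn_cat sumn_rows size_takel //.
  by congr (_ + _); apply: eq_big_nat => i i_range; rewrite /row nth_take //; lia.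
have hook_diag i : 1 <= i < d.+1 ->
    hook mu i i + i.*2 = row mu i + count (fun x => i <= x) r + d.+1.
  move=> i_range; have := col_durfee i_range; rewrite -/r.
  have := leq_row_young (i := i) (j := d) mu_young.
  by rewrite /hook /arm /leg; lia.
have sum_eq : \sum_(1 <= i < d.+1) (hook mu i i + i.*2) =
    \sum_(1 <= i < d.+1) (row mu i + count (fun x => i <= x) r + d.+1).
  exact: eq_big_nat.
rewrite [LHS]big_split [RHS]big_split [X in _ = X + _]big_split /= in sum_eq.
rewrite sum_double_nat -(sumn_sum_count r_le_d) sum_nat_const_nat in sum_eq.
by rewrite sumn_mu; lia.
Qed.

End DurfeeSquare.

Lemma hook_first_col mu i : young mu -> 1 <= i <= size mu ->
  hook mu i 1 = row mu i + (size mu - i).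
Proof.
move=> mu_young i_range; have := row_gt0_young mu_young i_range.
by rewrite /hook /arm /leg col1_young //; lia.
Qed.

Lemma sumn_first_col_hooks mu : young mu ->
  sumn (first_col_hooks mu) = sumn mu + 'C(size mu, 2).
Proof.
move=> mu_young; rewrite /first_col_hooks sumnE big_map.
have -> : iota 1 (size mu) = index_iota 1 (size mu).+1 by rewrite /index_iota subn1.
rewrite (eq_big_nat _ _ (F2 := fun i => row mu i + (size mu - i))); last first.
  by move=> i; apply: hook_first_col.
rewrite big_split /= -sumn_rows.
congr (_ + _); rewrite big_add1 big_nat_rev -bin2_sum /=.
by apply: eq_big_nat => i i_lt; lia.
Qed.

Lemma first_col_hooks_partition mu : young mu ->
  is_partition_of (first_col_hooks mu) (sumn mu + 'C(size mu, 2)).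
Proof.
move=> mu_young; rewrite /is_partition_of sumn_first_col_hooks // eqxx andbT.
apply/andP; split; last by rewrite all_map; apply/allP => i _ /=; rewrite /hook; lia.
apply: (homo_sorted_in (P := fun i => 1 <= i <= size mu) (e := leq)).
- move=> i j i_range j_range /= le_ij.
  rewrite !hook_first_col //; have := leq_row_young (i := i) (j := j) mu_young.
  by move: i_range j_range => /andP[? ?] /andP[? ?]; lia.
- by apply/allP => i; rewrite mem_iota; lia.
- exact: iota_sorted.
Qed.

(* [add_hook a mu] wraps [mu] in a new outermost hook with arm and leg [a], so
   [frobenius a] is the self-conjugate diagram with Frobenius coordinates
   (a | a). *)
Definition add_hook (a : nat) (mu : seq nat) : seq nat :=
  a.+1 :: map S mu ++ nseq (a - size mu) 1.

Fixpoint frobenius (a : seq nat) : seq nat :=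
  if a is a0 :: a' then add_hook a0 (frobenius a') else [::].

Section AddHook.

Variables (a : nat) (mu : seq nat).
Hypothesis size_le : size mu <= a.

Lemma size_add_hook : size (add_hook a mu) = a.+1.
Proof. by rewrite /= size_cat size_map size_nseq; lia. Qed.

Lemma row_add_hook j : row (add_hook a mu) j.+2 =
  if j < size mu then (row mu j.+1).+1 else (j < a : nat).
Proof.
rewrite /row /= nth_cat size_map; case: ifP => j_lt; first by rewrite (nth_map 0).
by rewrite nth_nseq; case: ltnP; case: ltnP; lia.
Qed.

Lemma col_add_hook j : col (add_hook a mu) j.+2 = (j < a) + col mu j.+1.
Proof. by rewrite /col /= count_cat count_map count_nseq /= mul0n addn0. Qed.

Lemma young_add_hook : young mu -> row mu 1 <= a -> young (add_hook a mu).
Proof.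
case/andP=> mu_sorted mu_pos row1_le; apply/andP; split.
  rewrite /= cat_path path_map; apply/andP; split.
    by case: mu mu_sorted row1_le => //= x mu' -> /=; rewrite /row /=; lia.
  by rewrite last_map; elim: (a - size mu) (last _ _) => //= *; lia.
rewrite /= all_cat all_map; apply/andP; split; first exact/allP.
by apply/allP => x /nseqP[->].
Qed.

End AddHook.

Lemma size_le_head a0 a : sorted gtn (a0 :: a) -> size a <= a0.
Proof.
elim: a a0 => [|a1 a IHa] a0 //= /andP[lt_a1 a_sorted].
by have := IHa a1 a_sorted; lia.
Qed.

Lemma size_frobenius_le a0 a : sorted gtn (a0 :: a) -> size (frobenius a) <= a0.
Proof.
elim: a a0 => [|a1 a IHa] a0 // /andP[lt_a1 a_sorted].
by rewrite size_add_hook; [lia | exact: IHa].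
Qed.

Lemma size_frobenius a0 a : sorted gtn (a0 :: a) -> size (frobenius (a0 :: a)) = a0.+1.
Proof. by move=> a_sorted; rewrite size_add_hook // (size_frobenius_le a_sorted). Qed.

Lemma size_le_frobenius a : sorted gtn a -> size a <= size (frobenius a).
Proof.
case: a => [|a0 a] // a_sorted.
by rewrite size_frobenius //= ltnS (size_le_head a_sorted).
Qed.

Lemma row1_frobenius_le a0 a : sorted gtn (a0 :: a) -> row (frobenius a) 1 <= a0.
Proof. by case: a => [|a1 a] //= /andP[]. Qed.

Lemma young_frobenius a : sorted gtn a -> young (frobenius a).
Proof.
elim: a => [|a0 a IHa] // a_sorted.
apply: young_add_hook; first exact: size_frobenius_le.
  exact: IHa (path_sorted a_sorted).
exact: row1_frobenius_le.
Qed.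

Lemma in_diagram_frobenius a i : sorted gtn a -> 1 <= i ->
  in_diagram (frobenius a) i i = (i <= size a).
Proof.
elim: a i => [|a0 a IHa] [|[|j]] //= a_sorted _; rewrite /in_diagram //=.
have a'_sorted := path_sorted a_sorted.
rewrite row_add_hook ?(size_frobenius_le a_sorted) //; case: ifP => j_lt.
  by have := IHa j.+1 a'_sorted isT; rewrite /in_diagram.
have := size_le_frobenius a'_sorted; case: (j < a0); lia.
Qed.

Lemma arm_frobenius a i : sorted gtn a -> 1 <= i <= size a ->
  arm (frobenius a) i i = nth 0 a i.-1.
Proof.
elim: a i => [|a0 a IHa] [|[|j]] //= a_sorted i_range.
  by rewrite /arm /row /=; lia.
have a'_sorted := path_sorted a_sorted.
have j_lt : j < size (frobenius a) by have := size_le_frobenius a'_sorted; lia.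
by rewrite /arm row_add_hook ?(size_frobenius_le a_sorted) // j_lt -(IHa j.+1).
Qed.

Lemma leg_frobenius a i : sorted gtn a -> 1 <= i <= size a ->
  leg (frobenius a) i i = nth 0 a i.-1.
Proof.
elim: a i => [|a0 a IHa] [|[|j]] //= a_sorted i_range.
  have a_young := young_frobenius (a := a0 :: a) a_sorted.
  by rewrite /leg (col1_young a_young) (size_frobenius a_sorted); lia.
have a'_sorted := path_sorted a_sorted.
have j_lt : j < a0 by have := size_le_head a_sorted; lia.
by rewrite /leg col_add_hook j_lt -(IHa j.+1) // /leg; lia.
Qed.

Lemma ltn_half_odd x y : odd x -> odd y -> x < y -> x./2 < y./2.
Proof.
by move=> x_odd y_odd; rewrite -(odd_double_half x) -(odd_double_half y) x_odd y_odd; lia.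
Qed.

Lemma Y_eta_star_frobenius n eta :
  3 <= n -> sorted ltn eta -> all odd eta -> all (fun e => e./2 < n - 3) eta ->
  Y_eta_star n eta (frobenius (n - 3 :: map half (rev eta))).
Proof.
move=> n_ge3 eta_sorted eta_odd eta_small.
set a := n - 3 :: _.
have a_sorted : sorted gtn a.
  rewrite /a /= (path_sortedE (leT := gtn)); last by move=> x y z /= ? ?; lia.
  rewrite all_map all_rev eta_small /= map_rev rev_sorted.
  apply: (homo_sorted_in (P := odd) (e := ltn)) => // x y x_odd y_odd.
  exact: ltn_half_odd.
have size_a : size a = (size eta).+1 by rewrite /= size_map size_rev.
have hook_diag i : 1 <= i <= size a ->
    hook (frobenius a) i i = (nth 0 a i.-1).*2.+1.
  by move=> i_range; rewrite /hook arm_frobenius // leg_frobenius //; lia.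
split.
- exact: young_frobenius.
- by move=> i i_gt0; rewrite in_diagram_frobenius // size_a.
- by rewrite hook_diag ?size_a //=; lia.
- move=> [|[|j]] // /andP[_ j_lt]; rewrite hook_diag ?size_a //=.
  rewrite (nth_map 0) ?size_rev ?nth_rev; try lia.
  have -> : (size eta - j.+1) = (size eta - (j.+2 - 2)).-1 by lia.
  set e := nth 0 eta _; have e_odd : odd e by apply: (all_nthP 0 eta_odd); lia.
  by rewrite -[in RHS](odd_double_half e) e_odd.
- by move=> i i_range; rewrite arm_frobenius ?leg_frobenius ?size_a.
Qed.

Lemma size_Y_eta_star n eta mu : Y_eta_star n eta mu -> size mu = n - 2.
Proof.
case=> mu_young diag hook11 _ arm_leg.
have size_gt0 : 0 < size mu.
  by move: (diag 1 isT); rewrite /in_diagram /row; case: (mu).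
by move: hook11 (arm_leg 1 isT); rewrite /hook /arm /leg col1_young //; lia.
Qed.

Lemma sumn_Y_eta_star n eta mu : Y_eta_star n eta mu -> sumn mu = 2 * n - 5 + sumn eta.
Proof.
case=> mu_young diag hook11 hook_diag _; set l := size eta.
have durfee_le : l.+1 <= row mu l.+1.
  by have := diag l.+1 isT; rewrite leqnn /in_diagram => /and3P[].
have row_le : row mu l.+2 <= l.+1.
  by have := diag l.+2 isT; rewrite ltnn /in_diagram /=; case: leqP.
rewrite (sumn_diag_hooks mu_young durfee_le row_le) big_ltn // hook11.
rewrite (eq_big_nat _ _ (F2 := fun i => nth 0 eta (l - (i - 2)).-1)); last first.
  by move=> i i_range; apply: hook_diag; lia.
congr (_ + _); rewrite sumnE [RHS](big_nth 0) !big_add1 [RHS]big_nat_rev /=.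
by apply: eq_big_nat => i i_lt; congr nth; lia.
Qed.

Lemma leq_sumn_mem s x : x \in s -> x <= sumn s.
Proof. by elim: s => [|y s IHs] //=; rewrite inE => /orP[/eqP->|/IHs]; lia. Qed.

Theorem proposition4p10 (n k : nat) (eta : seq nat) :
  2 <= 2 * k -> 2 * k <= n - 4 ->
  Dbar_odd n k eta ->
  (exists mu, Y_eta_star n eta mu) /\
  (forall mu, Y_eta_star n eta mu ->
     is_partition_of (first_col_hooks mu) (Tnm n (n - 2 * k))).
Proof.
move=> k_gt0 k_le /andP[/and4P[eta_sorted eta_odd /eqP sum_eta _] _].
split.
  exists (frobenius (n - 3 :: map half (rev eta))).
  apply: Y_eta_star_frobenius => //; first lia.
  by apply/allP => e /leq_sumn_mem; rewrite sum_eta; lia.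
move=> mu Ymu; have [mu_young _ _ _ _] := Ymu.
have := first_col_hooks_partition mu_young.
rewrite (sumn_Y_eta_star Ymu) (size_Y_eta_star Ymu) sum_eta /Tnm.
suff -> : n * (n + 1) %/ 2 - (n - 2 * k) = 2 * n - 5 + (2 * k + 2) + 'C(n - 2, 2) by [].
by rewrite bin2 -divn2; nia.
Qed.
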